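(* Let $N$ be a nonnegative integer and let $f,a_1,d_1,d_2\in\mathbb{C}$ be such that every hypergeometric series below is well defined (no lower parameter is a nonpositive integer) and the denominator in the definition of $k$ below is nonzero. Put $$h=1-f+d_1+d_2-N,\qquad k=\frac{h(1+d_1+a_1-f)(1+d_2+a_1-f)}{d_1d_2-h(1+d_1+d_2+a_1-f)}.$$ Then $$ {}_{7}F_{6}\left[\begin{matrix} f-1,\ \frac{f+1}{2},\ a_1,\ d_1,\ d_2,\ 2f-2-d_1-d_2-a_1+N,\ -N\\ \frac{f-1}{2},\ f-a_1,\ f-d_1,\ f-d_2,\ 2+a_1+d_1+d_2-f-N,\ f+N\end{matrix};1\right]$$ $$=\frac{(f)_N\,(f-d_1-d_2)_N\,(f-a_1-d_1-1)_N\,(f-a_1-d_2-1)_N}{(f-d_1)_N\,(f-d_2)_N\,(f-a_1)_N\,(f-a_1-d_1-d_2-1)_N}\cdot\frac{(k+1)_N}{(k)_N}.$$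
   Context: $(x)_n$ denotes the Pochhammer symbol: $(x)_0=1$, $(x)_n=x(x+1)\cdots(x+n-1)$ for $n\ge1$. The generalized hypergeometric function is $${}_{r+1}F_{r}\left[\begin{matrix} a_1,\dots,a_{r+1}\\ b_1,\dots,b_r\end{matrix};z\right]=\sum_{n=0}^{\infty}\frac{(a_1)_n\cdots(a_{r+1})_n}{(b_1)_n\cdots(b_r)_n\,n!}z^n ,$$ where no $b_i$ is a nonpositive integer; when one upper parameter equals $-N$ with $N$ a nonnegative integer the series terminates. *)

(* The complex numbers are modelled as R[i] = complex R
   for an arbitrary R : realType (so R[i] is a copy of C). *)
From HB Require Import structures.
From mathcomp Require Import all_boot all_order all_algebra.
From mathcomp Require Import complex.
From mathcomp Require Import reals.
Set Implicit Arguments. Unset Strict Implicit. Unset Printing Implicit Defensive.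
Import Order.TTheory GRing.Theory Num.Theory.
Local Open Scope ring_scope.

Definition poch {F : ringType} (x : F) (n : nat) : F :=
  \prod_(i < n) (x + i%:R).

(* When one upper parameter equals -M, all terms with n > M vanish,
   so this equals the full (infinite) series. *)
Definition hypergeomT {F : fieldType} (As Bs : seq F) (z : F) (M : nat) : F :=
  \sum_(n < M.+1)
     (\prod_(a <- As) poch a n) / ((\prod_(b <- Bs) poch b n) * (n`!)%:R) * z ^+ n.

Definition not_nonpos_int {F : ringType} (b : F) : Prop :=
  forall m : nat, b <> - (m%:R).

(* Creative telescoping.  Write T_N(n) for the n-th term of the 7F6 series and
   S_N for its sum.  When f is transcendental over the field generated by the
   other parameters no denominator vanishes, and an explicit rational
   certificate G_N satisfies
       T_(N+1)(n) - rho_N T_N(n) = G_N(n+1) - G_N(n),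
   so summing over n gives S_(N+1) = rho_N S_N.  The closed form satisfies the
   same first-order recurrence with the same initial value 1, hence equals S_N.
   Clearing denominators turns this into a polynomial identity in f, which
   therefore holds at every value of f; for the given f the non-degeneracy
   hypotheses allow dividing back, and (k+1)_N/(k)_N = (k+N)/k. *)
From HB Require Import structures.
From mathcomp Require Import all_boot all_order all_algebra.
From mathcomp Require Import complex.
From mathcomp Require Import reals.
From mathcomp Require Import fraction.
From mathcomp Require Import ring zify.
Import Order.TTheory GRing.Theory Num.Theory.
Local Open Scope ring_scope.

Lemma poch0 (F : ringType) (x : F) : poch x 0 = 1.
Proof. by rewrite /poch big_ord0. Qed.

Lemma pochS (F : ringType) (x : F) n : poch x n.+1 = poch x n * (x + n%:R).
Proof. by rewrite /poch big_ord_recr. Qed.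

Lemma poch_add1 (F : comRingType) (x : F) n :
  x * poch (x + 1) n = poch x n * (x + n%:R).
Proof.
elim: n => [|n IH]; first by rewrite !poch0 addr0 mulr1 mul1r.
by rewrite !pochS mulrA IH -!natr1; ring.
Qed.

Lemma pochD (F : comRingType) (x : F) n m :
  poch x (n + m) = poch x n * poch (x + n%:R) m.
Proof.
elim: m => [|m IH]; first by rewrite addn0 poch0 mulr1.
by rewrite addnS !pochS IH natrD; ring.
Qed.

Lemma fact_poch (F : comRingType) n : (n`!)%:R = poch (1 : F) n.
Proof.
elim: n => [|n IH]; first by rewrite poch0.
by rewrite factS natrM pochS IH -nat1r; ring.
Qed.

Lemma rmorph_poch (R1 R2 : comRingType) (phi : {rmorphism R1 -> R2}) x n :
  phi (poch x n) = poch (phi x) n.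
Proof.
elim: n => [|n IH]; first by rewrite !poch0 rmorph1.
by rewrite !pochS rmorphM rmorphD rmorph_nat IH.
Qed.

Lemma poch_neq0 (F : fieldType) (x : F) n :
  (forall i, (i < n)%N -> x + i%:R != 0) -> poch x n != 0.
Proof. by move=> H; apply/prodf_neq0 => i _; exact: H. Qed.

Lemma poch_not_nonpos_neq0 (F : fieldType) (x : F) n :
  not_nonpos_int x -> poch x n != 0.
Proof.
move=> H; apply: poch_neq0 => i _; apply/eqP => E.
by apply: (H i); rewrite -[x](addrK i%:R) E; ring.
Qed.

Lemma poch_of_succ (F : fieldType) (x y : F) n :
  x + 1 = y -> x + n%:R != 0 -> poch x n = x * poch y n / (x + n%:R).
Proof. by move=> <- hx; rewrite poch_add1 mulfK. Qed.

Lemma poch_succ_of (F : fieldType) (x y : F) n :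
  x + 1 = y -> x != 0 -> poch y n = poch x n * (x + n%:R) / x.
Proof. by move=> <- hx; rewrite -poch_add1 mulrAC divff // mul1r. Qed.

Lemma poch_ratio_add1 (F : fieldType) (k : F) n :
  k != 0 -> poch k n != 0 -> poch (k + 1) n / poch k n = (k + n%:R) / k.
Proof.
move=> hk hkn; apply: (mulIf hk).
by rewrite mulrAC [poch (k + 1) n * k]mulrC poch_add1; field; rewrite hk hkn.
Qed.

Lemma prod_pochD {R : comRingType} (s : seq R) {n N : nat} : (n <= N)%N ->
  \prod_(x <- s) poch x N
  = \prod_(x <- s) poch x n * \prod_(x <- s) poch (x + n%:R) (N - n).
Proof.
move=> hn; rewrite -big_split; apply: eq_bigr => x _ /=.
by rewrite -{1}(subnKC hn) pochD.
Qed.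

Lemma eq_neq0 {F : ringType} {x y : F} : y != 0 -> x = y -> x != 0.
Proof. by move=> H ->. Qed.

(* The very-well-poised 7F6 of the theorem, with [b, c, d] for [a1, d1, d2].
   [i2] stands for 1/2; keeping it a parameter lets the parameter lists be
   transported along ring morphisms. *)
Definition wp_upper {R : ringType} (i2 f b c d : R) (N : nat) : seq R :=
  [:: f - 1; (f + 1) * i2; b; c; d; 2 * f - 2 - c - d - b + N%:R; - N%:R].
Definition wp_lower {R : ringType} (i2 f b c d : R) (N : nat) : seq R :=
  [:: (f - 1) * i2; f - b; f - c; f - d; 2 + b + c + d - f - N%:R; f + N%:R].

Definition wp_term {F : fieldType} (f b c d : F) (N n : nat) : F :=
  (\prod_(x <- wp_upper 2^-1 f b c d N) poch x n) /
  ((\prod_(x <- wp_lower 2^-1 f b c d N) poch x n) * (n`!)%:R) * 1 ^+ n.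

Definition wp_ratio {F : fieldType} (f b c d N n : F) :=
  let e := 2 * f - 2 - c - d - b + N in
  let l := 2 + b + c + d - f - N in
  ((f - 1 + n) * ((f + 1) / 2 + n) * (b + n) * (c + n) * (d + n) * (e + n) * (- N + n))
  / (((f - 1) / 2 + n) * (f - b + n) * (f - c + n) * (f - d + n) * (l + n) * (f + N + n)
     * (n + 1)).

Definition wp_ratioN {F : fieldType} (f b c d N n : F) :=
  let e := 2 * f - 2 - c - d - b + N in
  (e + n) * (N + 1) * (f - 1 - e + n) * (f + N) / (e * (N + 1 - n) * (f - 1 - e) * (f + N + n)).

Lemma wp_term0 (F : fieldType) (f b c d : F) N : wp_term f b c d N 0 = 1.
Proof. by rewrite /wp_term !big_cons !big_nil !poch0 !mulr1 invr1 mulr1. Qed.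

Lemma wp_termSN_eq0 (F : fieldType) (f b c d : F) N : wp_term f b c d N N.+1 = 0.
Proof.
by rewrite /wp_term !big_cons !big_nil [poch (- _) _]pochS addNr !(mulr0, mul0r).
Qed.

Lemma wp_termS (F : fieldType) (f b c d : F) N n :
  wp_term f b c d N n.+1 = wp_term f b c d N n * wp_ratio f b c d N%:R n%:R.
Proof.
rewrite /wp_term /wp_ratio /wp_upper /wp_lower !big_cons !big_nil !pochS factS natrM.
by rewrite -[n.+1%:R]natr1 !expr1n !mulr1 !invfM; ring.
Qed.

Lemma wp_term_succN (F : fieldType) (f b c d : F) N n :
  poch ((f - 1) / 2) n != 0 -> poch (f - b) n != 0 -> poch (f - c) n != 0 ->
  poch (f - d) n != 0 -> poch (2 + b + c + d - f - N%:R) n != 0 ->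
  poch (f + N%:R) n != 0 -> (n`!)%:R != 0 :> F ->
  2 * f - 2 - c - d - b + N%:R != 0 -> - (N.+1)%:R + n%:R != 0 :> F ->
  2 + b + c + d - f - (N.+1)%:R + n%:R != 0 -> f + N%:R != 0 ->
  N%:R + 1 - n%:R != 0 :> F -> f - 1 - (2 * f - 2 - c - d - b + N%:R) != 0 ->
  f + N%:R + n%:R != 0 ->
  wp_term f b c d N.+1 n = wp_term f b c d N n * wp_ratioN f b c d N%:R n%:R.
Proof.
move=> h1 h2 h3 h4 h5 h6 h7 h8 h9 h10 h11 h12 h13 h14.
have NS : (N.+1)%:R = N%:R + 1 :> F by rewrite -natr1.
rewrite /wp_term /wp_upper /wp_lower !big_cons !big_nil !expr1n !mulr1.
rewrite (@poch_succ_of _ (2 * f - 2 - c - d - b + N%:R) (2 * f - 2 - c - d - b + (N.+1)%:R)) //;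
  last by rewrite NS; ring.
rewrite (@poch_of_succ _ (- (N.+1)%:R) (- N%:R)) //; last by rewrite NS; ring.
rewrite (@poch_of_succ _ (2 + b + c + d - f - (N.+1)%:R) (2 + b + c + d - f - N%:R)) //;
  last by rewrite NS; ring.
rewrite (@poch_succ_of _ (f + N%:R) (f + (N.+1)%:R)) //; last by rewrite NS; ring.
rewrite /wp_ratioN; field.
rewrite -[(N.+1)%:R]nat1r in h9 h10.
by rewrite h1 h2 h3 h4 h5 h6 h7 h8 h9 h10 h11 h12 h13 h14.
Qed.

Definition closed_num {R : comRingType} (f b c d : R) N :=
  poch f N * poch (f - c - d) N * poch (f - b - c - 1) N * poch (f - b - d - 1) N.
Definition closed_den {R : comRingType} (f b c d : R) N :=
  poch (f - c) N * poch (f - d) N * poch (f - b) N * poch (f - b - c - d - 1) N.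

(* [k_num] and [k_num_shift] are the numerators of [k] and [k + N] over the
   common denominator [c d - h (1 + c + d + b - f)], where [h = 1 - f + c + d - N]. *)
Definition k_num {R : comRingType} (f b c d N : R) :=
  (1 - f + c + d - N) * (1 + c + b - f) * (1 + d + b - f).
Definition k_num_shift {R : comRingType} (f b c d N : R) : R :=
  (1 - f + c + d - N) * (1 + c + b - f) * (1 + d + b - f)
  + N * (c * d - (1 - f + c + d - N) * (1 + c + d + b - f)).

Definition closed_form {F : fieldType} (f b c d : F) N :=
  closed_num f b c d N * k_num_shift f b c d N%:R / (closed_den f b c d N * k_num f b c d N%:R).

Definition sum_ratio {F : fieldType} (f b c d N : F) :=
  let e := 2 * f - 2 - c - d - b + N in
  - ((f + N) * (f - c - d + N) * (f - b - c - 1 + N) * (f - b - d - 1 + N)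
     / ((f + N - c) * (f + N - d) * (f + N - b) * (f - 1 - e))
     * k_num_shift f b c d (N + 1) * (1 - f + c + d - N)
     / (k_num_shift f b c d N * (1 - f + c + d - (N + 1)))).

Lemma closed_form0 (F : fieldType) (f b c d : F) :
  1 + d + b - f != 0 -> 1 + c + b - f != 0 -> 1 - f + c + d - 0%:R != 0 ->
  closed_form f b c d 0 = 1.
Proof.
move=> h1 h2 h3.
rewrite /closed_form /closed_num /closed_den /k_num /k_num_shift !poch0 !mulr1 !mul1r.
by rewrite mul0r addr0 divff // !mulf_neq0.
Qed.

Lemma closed_formS (F : fieldType) (f b c d : F) N :
  1 + d + b - f != 0 -> 1 + c + b - f != 0 -> 1 - f + c + d - N%:R != 0 ->
  poch (f - b - c - d - 1) N != 0 -> poch (f - b) N != 0 ->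
  poch (f - d) N != 0 -> poch (f - c) N != 0 ->
  1 - f + c + d - (N%:R + 1) != 0 -> k_num_shift f b c d N%:R != 0 ->
  f - 1 - (2 * f - 2 - c - d - b + N%:R) != 0 ->
  f + N%:R - b != 0 -> f + N%:R - d != 0 -> f + N%:R - c != 0 ->
  f - b - c - d - 1 + N%:R != 0 ->
  closed_form f b c d N.+1 = sum_ratio f b c d N%:R * closed_form f b c d N.
Proof.
move=> h1 h2 h3 h4 h5 h6 h7 h8 h9 h10 h11 h12 h13 h14.
rewrite /closed_form /closed_num /closed_den /k_num !pochS -[(N.+1)%:R]natr1 /sum_ratio.
by field; rewrite h1 h2 h3 h4 h5 h6 h7 h8 h9 h10 h11 h12 h13 h14.
Qed.

(* A rational certificate for the recurrence [S_(N+1) = sum_ratio N * S_N]: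
   [cert_g N n] is [- G_N(n+1) / T_N(n)] and [cert_Phi N n] is [- G_N(n) / T_N(n)]. *)
Definition cert_K {R : comRingType} (a b c d N : R) : R :=
  -N - N^+2 - d*N^+2 + d^+2*N - c*N^+2 + 2*c*d*N - c*d^+2 + c^+2*N - c^+2*d - b*N^+2
  + 2*b*d*N - b*d^+2 + 2*b*c*N - 2*b*c*d - b*c^+2 + b^+2*N - b^+2*d - b^+2*c - a - a*N
  + a*N^+2 - 3*a*d*N + a*d^+2 - 3*a*c*N + 3*a*c*d + a*c^+2 - 3*a*b*N + 3*a*b*d + 3*a*b*c
  + a*b^+2 + 2*a^+2*N - 2*a^+2*d - 2*a^+2*c - 2*a^+2*b + a^+3.

Definition cert_q {F : fieldType} (f b c d N n : F) :=
  let e := 2 * f - 2 - c - d - b + N in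
  (f + N) * (e + N + 1)
  / ((f + N - b) * (f + N - c) * (f + N - d) * e * (f - 1 - e) * k_num_shift f b c d N)
  * (n * (n + (f - 1) - 1) + cert_K (f - 1) b c d N).

Definition cert_g {F : fieldType} (f b c d N n : F) :=
  let e := 2 * f - 2 - c - d - b + N in
  ((f - 1) + n) * (b + n) * (c + n) * (d + n) * (e + n) * cert_q f b c d N (n + 1)
  / (((f - 1) + 2 * n) * (f + N + n)).

Definition cert_Phi {F : fieldType} (f b c d N n : F) :=
  let e := 2 * f - 2 - c - d - b + N in
  - (cert_q f b c d N n * n * ((f - 1) - b + n) * ((f - 1) - c + n) * ((f - 1) - d + n)
     * (f - 1 - e + n) / (((f - 1) + 2 * n) * (N + 1 - n))).

Ltac unfold_cert :=
  rewrite /wp_ratio /cert_Phi /wp_ratioN /cert_g /sum_ratio /cert_q /cert_K /k_num_shift.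

Lemma cert_eq0 (F : fieldType) (f b c d N : F) :
  f + N != 0 -> f - 1 != 0 -> k_num_shift f b c d N != 0 ->
  f - 1 - (2 * f - 2 - c - d - b + N) != 0 -> 2 * f - 2 - c - d - b + N != 0 ->
  f + N - d != 0 -> f + N - c != 0 -> f + N - b != 0 -> 1 - f + c + d - (N + 1) != 0 ->
  1 - sum_ratio f b c d N + cert_g f b c d N 0 = 0.
Proof.
move=> h1 h2 h3 h4 h5 h6 h7 h8 h9; unfold_cert; rewrite /k_num_shift in h3.
by field; rewrite h1 h2 h3 h4 h5 h6 h7 h8 h9.
Qed.

Lemma cert_eq (F : fieldType) (f b c d N n : F) :
  N + 1 - n != 0 -> f - 1 + 2 * n != 0 -> k_num_shift f b c d N != 0 ->
  f - 1 - (2 * f - 2 - c - d - b + N) != 0 -> 2 * f - 2 - c - d - b + N != 0 ->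
  f + N - d != 0 -> f + N - c != 0 -> f + N - b != 0 -> f + N + n != 0 ->
  1 - f + c + d - (N + 1) != 0 ->
  wp_ratioN f b c d N n - sum_ratio f b c d N + cert_g f b c d N n - cert_Phi f b c d N n = 0.
Proof.
move=> h1 h2 h3 h4 h5 h6 h7 h8 h9 h10; unfold_cert; rewrite /k_num_shift in h3.
by field; rewrite h1 h2 h3 h4 h5 h6 h7 h8 h9 h10.
Qed.

Lemma cert_ratio (F : fieldType) (f b c d N m : F) :
  f + N + m != 0 -> f - 1 + 2 * m != 0 -> N + 1 - (m + 1) != 0 ->
  f - 1 + 2 * (m + 1) != 0 -> 2 != 0 :> F -> m + 1 != 0 ->
  2 + b + c + d - f - N + m != 0 -> f - d + m != 0 -> f - c + m != 0 -> f - b + m != 0 ->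
  wp_ratio f b c d N m * cert_Phi f b c d N (m + 1) - cert_g f b c d N m = 0.
Proof.
move=> h1 h2 h3 h4 h5 h6 h7 h8 h9 h10; rewrite /wp_ratio /cert_Phi /cert_g.
by field; rewrite h1 h2 h3 h4 h5 h6 h7 h8 h9 h10.
Qed.

Lemma cert_eqN (F : fieldType) (f b c d N : F) :
  f + N + N != 0 -> f - 1 + 2 * N != 0 -> k_num_shift f b c d N != 0 ->
  f - 1 - (2 * f - 2 - c - d - b + N) != 0 -> 2 * f - 2 - c - d - b + N != 0 ->
  f + N - d != 0 -> f + N - c != 0 -> f + N - b != 0 -> 2 != 0 :> F -> N + 1 != 0 ->
  f + (N + 1) + N != 0 -> 2 + b + c + d - f - (N + 1) + N != 0 -> N + 1 - N != 0 ->
  wp_ratioN f b c d N N * wp_ratio f b c d (N + 1) N - cert_g f b c d N N = 0.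
Proof.
move=> h1 h2 h3 h4 h5 h6 h7 h8 h9 h10 h11 h12 h13; unfold_cert; rewrite /k_num_shift in h3.
by field; rewrite h1 h2 h3 h4 h5 h6 h7 h8 h9 h10 h11 h12 h13.
Qed.

Definition cert_G {F : fieldType} (f b c d : F) N n :=
  if n is m.+1 then - (wp_term f b c d N m * cert_g f b c d N%:R m%:R) else 0.

(* With [T = T_N(m)], [T r = T_N(m+1)], [T r k = T_(N+1)(m+1)] and
   [G_N(m+1) = - T g0], the certificate identities give the telescoping
   relation at [m+1]; the first and last lemmas are the boundary cases. *)
Lemma wz_combine0 (F : comRingType) (rh g0 : F) :
  1 - rh + g0 = 0 -> 1 - rh * 1 = - (1 * g0) - 0.
Proof.
move=> H; apply/subr0_eq.
by transitivity (1 - rh + g0); [ring | rewrite H].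
Qed.

Lemma wz_combine (F : comRingType) (T r k rh g1 g0 P : F) :
  k - rh + g1 - P = 0 -> r * P - g0 = 0 ->
  T * r * k - rh * (T * r) = - (T * r * g1) - - (T * g0).
Proof.
move=> H1 H2; apply/subr0_eq.
transitivity (T * (r * (k - rh + g1 - P)) + T * (r * P - g0)); first ring.
by rewrite H1 H2; ring.
Qed.

Lemma wz_combineN (F : comRingType) (T k r rh g1 g : F) :
  k * r - g = 0 -> T * k * r - rh * 0 = - (0 * g1) - - (T * g).
Proof.
move=> H; apply/subr0_eq.
by transitivity (T * (k * r - g)); [ring | rewrite H; ring].
Qed.

Definition cleared_sum {R : comRingType} (i2 f b c d : R) N :=
  \sum_(n < N.+1) (\prod_(x <- wp_upper i2 f b c d N) poch x n)
    * (\prod_(x <- wp_lower i2 f b c d N) poch (x + n%:R) (N - n)) * poch (1 + n%:R) (N - n).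
Definition cleared_den {R : comRingType} (i2 f b c d : R) N :=
  (\prod_(x <- wp_lower i2 f b c d N) poch x N) * poch 1 N.

Lemma sum_wp_term_cleared (F : fieldType) (f b c d : F) N :
  \prod_(x <- wp_lower 2^-1 f b c d N) poch x N != 0 -> (N`!)%:R != 0 :> F ->
  (\sum_(n < N.+1) wp_term f b c d N n) * cleared_den 2^-1 f b c d N
  = cleared_sum 2^-1 f b c d N.
Proof.
move=> hP hF; rewrite /cleared_sum mulr_suml; apply: eq_bigr => [[n /= hn]] _.
have {}hn : (n <= N)%N by [].
have poch1_split : poch (1 : F) N = poch 1 n * poch (1 + n%:R) (N - n).
  by rewrite -{1}(subnKC hn) pochD.
rewrite fact_poch poch1_split in hF; rewrite (prod_pochD _ hn) in hP.
move: hP hF; rewrite !mulf_eq0 !negb_or => /andP [hP1 _] /andP [hF1 _].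
rewrite /cleared_den /wp_term (prod_pochD _ hn) poch1_split fact_poch expr1n mulr1.
by field; rewrite hP1 hF1.
Qed.

Ltac push_rmorph :=
  rewrite ?(rmorphM, rmorph_poch, rmorphD, rmorphB, rmorphN, rmorph_nat, rmorph1).

Section RmorphCleared.

Variables (R1 R2 : comRingType) (phi : {rmorphism R1 -> R2}).

Lemma rmorph_cleared_sum i2 f b c d N :
  phi (cleared_sum i2 f b c d N) = cleared_sum (phi i2) (phi f) (phi b) (phi c) (phi d) N.
Proof.
rewrite /cleared_sum rmorph_sum; apply: eq_bigr => n _.
by rewrite /wp_upper /wp_lower !big_cons !big_nil; push_rmorph.
Qed.

Lemma rmorph_cleared_den i2 f b c d N :
  phi (cleared_den i2 f b c d N) = cleared_den (phi i2) (phi f) (phi b) (phi c) (phi d) N.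
Proof. by rewrite /cleared_den /wp_lower !big_cons !big_nil; push_rmorph. Qed.

Lemma rmorph_closed_num f b c d N :
  phi (closed_num f b c d N) = closed_num (phi f) (phi b) (phi c) (phi d) N.
Proof. by rewrite /closed_num; push_rmorph. Qed.

Lemma rmorph_closed_den f b c d N :
  phi (closed_den f b c d N) = closed_den (phi f) (phi b) (phi c) (phi d) N.
Proof. by rewrite /closed_den; push_rmorph. Qed.

Lemma rmorph_k_num f b c d N :
  phi (k_num f b c d N) = k_num (phi f) (phi b) (phi c) (phi d) (phi N).
Proof. by rewrite /k_num; push_rmorph. Qed.

Lemma rmorph_k_num_shift f b c d N :
  phi (k_num_shift f b c d N) = k_num_shift (phi f) (phi b) (phi c) (phi d) (phi N).
Proof. by rewrite /k_num_shift; push_rmorph. Qed.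

End RmorphCleared.

Section GenericPoint.

Variables (F0 F : fieldType) (io : {rmorphism F0 -> F}) (f : F).
Hypothesis f_transcendental :
  forall p : {poly F0}, p != 0 -> (map_poly io p).[f] != 0.
Hypothesis char0 : forall m : nat, (m.+1)%:R != 0 :> F0.

Lemma natrS_neq0 m : (m.+1)%:R != 0 :> F.
Proof. by rewrite -(rmorph_nat io) fmorph_eq0. Qed.

Lemma fact_neq0 n : (n`!)%:R != 0 :> F.
Proof. by rewrite -(prednK (fact_gt0 n)) natrS_neq0. Qed.

Lemma natrB_neq0 (k m : nat) : (m < k)%N -> k%:R - m%:R != 0 :> F.
Proof.
move=> hmk; rewrite -natrB ?(ltnW hmk) //.
by rewrite -(prednK (_ : 0 < k - m)%N) ?subn_gt0 // natrS_neq0.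
Qed.

Lemma natrB_neq0' (k m : nat) : (m < k)%N -> m%:R - k%:R != 0 :> F.
Proof. by move=> hmk; rewrite -oppr_eq0 opprB natrB_neq0. Qed.

Lemma generic_lin_neq0 (s k : F0) : s != 0 -> io s * f + io k != 0.
Proof.
move=> hs.
have hp : 'X * s%:P + k%:P != 0.
  apply/eqP => /(congr1 (fun p : {poly F0} => p`_1)).
  rewrite coefD coefMC coefX coefC /= coef0 mul1r addr0 => E.
  by move: hs; rewrite E eqxx.
have := f_transcendental _ hp.
by rewrite rmorphD rmorphM /= map_polyX !map_polyC /= !hornerE mulrC.
Qed.

Lemma generic_addr_neq0 (k : F0) : f + io k != 0.
Proof. by have := generic_lin_neq0 1 k (oner_neq0 F0); rewrite rmorph1 mul1r. Qed.

Lemma generic_subr_neq0 (k : F0) : io k - f != 0.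
Proof.
have neg1 : (-1 : F0) != 0 by rewrite oppr_eq0 oner_eq0.
have := generic_lin_neq0 _ k neg1.
by rewrite rmorphN rmorph1 mulN1r addrC.
Qed.

Lemma generic_mul2_neq0 (k : F0) : 2 * f + io k != 0.
Proof. by have := generic_lin_neq0 2 k (char0 1); rewrite rmorph_nat. Qed.

Lemma generic_half_neq0 (k : F0) : f / 2 + io k != 0.
Proof.
have half : (2^-1 : F0) != 0 by rewrite invr_eq0 char0.
have := generic_lin_neq0 _ k half.
by rewrite fmorphV rmorph_nat mulrC.
Qed.

Lemma generic_k_num_shift_neq0 (b c d : F0) (N : nat) :
  k_num_shift f (io b) (io c) (io d) N%:R != 0.
Proof.
(* [p] is [k_num_shift] as a polynomial in [f]; its leading term is [- X^3]. *)
pose t : F0 := N%:R.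
pose H0 := 1 + c + d - t. pose X0 := 1 + c + b. pose Y0 := 1 + d + b.
pose Z0 := 1 + c + d + b.
pose a2 := H0 + X0 + Y0 - t.
pose a1 := - (H0 * X0 + H0 * Y0 + X0 * Y0) + t * (H0 + Z0).
pose a0 := H0 * X0 * Y0 + t * (c * d - H0 * Z0).
pose p : {poly F0} := - 'X^3 + a2 *: 'X^2 + a1 *: 'X + a0%:P.
have hp : p != 0.
  apply/eqP => /(congr1 (fun p : {poly F0} => p`_3)).
  rewrite /p !coefD coefN !coefZ !coefXn coefX coefC /= coef0 !mulr0 !addr0 => /eqP.
  by rewrite oppr_eq0 oner_eq0.
have := f_transcendental _ hp.
rewrite /p !rmorphD rmorphN /= !map_polyZ /= !map_polyXn map_polyX !map_polyC /=.
rewrite !(hornerD, hornerN, hornerZ, hornerXn, hornerX, hornerC).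
rewrite /a2 /a1 /a0 /k_num_shift /H0 /X0 /Y0 /Z0 /t.
rewrite ?rmorphD ?rmorphB ?rmorphN ?rmorphM ?rmorph1 ?rmorph_nat.
by apply: contra_neq => E; rewrite -E; ring.
Qed.

Ltac push_io := rewrite ?(rmorphD, rmorphB, rmorphN, rmorphM, rmorph_nat, rmorph1, fmorphV).
Ltac addr_neq0 k := apply: (eq_neq0 (generic_addr_neq0 k)); push_io; ring.
Ltac subr_neq0 k := apply: (eq_neq0 (generic_subr_neq0 k)); push_io; ring.
Ltac mul2_neq0 k := apply: (eq_neq0 (generic_mul2_neq0 k)); push_io; ring.
Ltac half_neq0 k :=
  apply: (eq_neq0 (generic_half_neq0 k)); push_io; field;
  apply: (eq_neq0 (natrS_neq0 1)); ring.
Ltac nat_neq0 k m := apply: (eq_neq0 (natrB_neq0 k m ltac:(lia))); ring.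
Ltac nat_neq0' k m := apply: (eq_neq0 (natrB_neq0' k m ltac:(lia))); ring.

Variables b c d : F0.

Local Notation T := (wp_term f (io b) (io c) (io d)).
Local Notation G := (cert_G f (io b) (io c) (io d)).
Local Notation rho N := (sum_ratio f (io b) (io c) (io d) N%:R).

Lemma generic_wp_term_succN N n : (n <= N)%N ->
  T N.+1 n = T N n * wp_ratioN f (io b) (io c) (io d) N%:R n%:R.
Proof.
move=> hn; apply: wp_term_succN.
- apply: poch_neq0 => i _; half_neq0 (i%:R - (2 : F0)^-1 : F0).
- apply: poch_neq0 => i _; addr_neq0 (i%:R - b : F0).
- apply: poch_neq0 => i _; addr_neq0 (i%:R - c : F0).
- apply: poch_neq0 => i _; addr_neq0 (i%:R - d : F0).
- apply: poch_neq0 => i _; subr_neq0 (2 + b + c + d - N%:R + i%:R : F0).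
- apply: poch_neq0 => i _; addr_neq0 (N%:R + i%:R : F0).
- exact: fact_neq0.
- mul2_neq0 (-2 - c - d - b + N%:R : F0).
- nat_neq0' N.+1 n.
- subr_neq0 (2 + b + c + d - (N.+1)%:R + n%:R : F0).
- addr_neq0 (N%:R : F0).
- nat_neq0 N.+1 n.
- subr_neq0 (1 + b + c + d - N%:R : F0).
- addr_neq0 (N%:R + n%:R : F0).
Qed.

Lemma generic_wz_step N n : (n < N.+2)%N ->
  T N.+1 n - rho N * T N n = G N n.+1 - G N n.
Proof.
case: n => [_ | m hm].
  rewrite /cert_G !wp_term0 (_ : 0%:R = 0) //; apply: wz_combine0; apply: cert_eq0.
  - addr_neq0 (N%:R : F0).
  - addr_neq0 (-1 : F0).
  - exact: generic_k_num_shift_neq0.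
  - subr_neq0 (1 + b + c + d - N%:R : F0).
  - mul2_neq0 (-2 - c - d - b + N%:R : F0).
  - addr_neq0 (N%:R - d : F0).
  - addr_neq0 (N%:R - c : F0).
  - addr_neq0 (N%:R - b : F0).
  - subr_neq0 (1 + c + d - N%:R - 1 : F0).
have [ltmN | leNm] := ltnP m N.
  rewrite /cert_G generic_wp_term_succN // wp_termS -[(m.+1)%:R]natr1.
  apply: wz_combine.
    apply: cert_eq.
    - nat_neq0 N.+1 m.+1.
    - addr_neq0 (-1 + 2 * (m%:R + 1) : F0).
    - exact: generic_k_num_shift_neq0.
    - subr_neq0 (1 + b + c + d - N%:R : F0).
    - mul2_neq0 (-2 - c - d - b + N%:R : F0).
    - addr_neq0 (N%:R - d : F0).
    - addr_neq0 (N%:R - c : F0).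
    - addr_neq0 (N%:R - b : F0).
    - addr_neq0 (N%:R + m%:R + 1 : F0).
    - subr_neq0 (1 + c + d - N%:R - 1 : F0).
  apply: cert_ratio.
  - addr_neq0 (N%:R + m%:R : F0).
  - addr_neq0 (-1 + 2 * m%:R : F0).
  - nat_neq0 N.+1 m.+1.
  - addr_neq0 (-1 + 2 * (m%:R + 1) : F0).
  - exact: natrS_neq0 1.
  - by rewrite natr1 natrS_neq0.
  - subr_neq0 (2 + b + c + d - N%:R + m%:R : F0).
  - addr_neq0 (m%:R - d : F0).
  - addr_neq0 (m%:R - c : F0).
  - addr_neq0 (m%:R - b : F0).
have -> : m = N by apply/eqP; rewrite eqn_leq leNm andbT -ltnS.
rewrite /cert_G wp_termSN_eq0 wp_termS generic_wp_term_succN // -[(N.+1)%:R]natr1.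
apply: wz_combineN; apply: cert_eqN.
- addr_neq0 (N%:R + N%:R : F0).
- addr_neq0 (-1 + 2 * N%:R : F0).
- exact: generic_k_num_shift_neq0.
- subr_neq0 (1 + b + c + d - N%:R : F0).
- mul2_neq0 (-2 - c - d - b + N%:R : F0).
- addr_neq0 (N%:R - d : F0).
- addr_neq0 (N%:R - c : F0).
- addr_neq0 (N%:R - b : F0).
- exact: natrS_neq0 1.
- by rewrite natr1 natrS_neq0.
- addr_neq0 (N%:R + 1 + N%:R : F0).
- subr_neq0 (2 + b + c + d - (N%:R + 1) + N%:R : F0).
- by rewrite addrAC subrr add0r oner_neq0.
Qed.

Lemma generic_sum_succN N :
  \sum_(n < N.+2) T N.+1 n = rho N * \sum_(n < N.+1) T N n.
Proof.
have := @telescope_sumr_eq _ 0 N.+2 (G N) (fun n => T N.+1 n - rho N * T N n) (leq0n _)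
  (fun n hn => generic_wz_step N n (andP hn).2).
rewrite big_mkord sumrB -mulr_sumr /cert_G /= wp_termSN_eq0 mul0r !oppr0 !addr0.
have -> : \sum_(i < N.+2) T N i = \sum_(i < N.+1) T N i.
  by rewrite big_ord_recr /= [T N _]wp_termSN_eq0 addr0.
by move/eqP; rewrite subr_eq0 => /eqP.
Qed.

Lemma generic_sum_closed_form N :
  \sum_(n < N.+1) T N n = closed_form f (io b) (io c) (io d) N.
Proof.
elim: N => [|N IH].
  rewrite big_ord_recl big_ord0 addr0 wp_term0 closed_form0 //.
  - subr_neq0 (1 + d + b : F0).
  - subr_neq0 (1 + c + b : F0).
  - subr_neq0 (1 + c + d - 0%:R : F0).
rewrite generic_sum_succN IH closed_formS //.
- subr_neq0 (1 + d + b : F0).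
- subr_neq0 (1 + c + b : F0).
- subr_neq0 (1 + c + d - N%:R : F0).
- apply: poch_neq0 => i _; addr_neq0 (- b - c - d - 1 + i%:R : F0).
- apply: poch_neq0 => i _; addr_neq0 (i%:R - b : F0).
- apply: poch_neq0 => i _; addr_neq0 (i%:R - d : F0).
- apply: poch_neq0 => i _; addr_neq0 (i%:R - c : F0).
- subr_neq0 (1 + c + d - N%:R - 1 : F0).
- exact: generic_k_num_shift_neq0.
- subr_neq0 (1 + b + c + d - N%:R : F0).
- addr_neq0 (N%:R - b : F0).
- addr_neq0 (N%:R - d : F0).
- addr_neq0 (N%:R - c : F0).
- addr_neq0 (- b - c - d - 1 + N%:R : F0).
Qed.

Lemma generic_cleared_identity N :
  let ib := io b in let ic := io c in let id := io d in
  cleared_sum 2^-1 f ib ic id N * (closed_den f ib ic id N * k_num f ib ic id N%:R)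
  = closed_num f ib ic id N * k_num_shift f ib ic id N%:R * cleared_den 2^-1 f ib ic id N.
Proof.
move=> ib ic id.
have hden : closed_den f ib ic id N != 0.
  rewrite /closed_den !mulf_neq0 //.
  - apply: poch_neq0 => i _; addr_neq0 (i%:R - c : F0).
  - apply: poch_neq0 => i _; addr_neq0 (i%:R - d : F0).
  - apply: poch_neq0 => i _; addr_neq0 (i%:R - b : F0).
  - apply: poch_neq0 => i _; addr_neq0 (- b - c - d - 1 + i%:R : F0).
have hk : k_num f ib ic id N%:R != 0.
  rewrite /k_num !mulf_neq0 //.
  - subr_neq0 (1 + c + d - N%:R : F0).
  - subr_neq0 (1 + c + b : F0).
  - subr_neq0 (1 + d + b : F0).
rewrite -sum_wp_term_cleared.
- by rewrite generic_sum_closed_form /closed_form; field; rewrite hden hk.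
- rewrite /wp_lower !big_cons big_nil mulr1 !mulf_neq0 //.
  + apply: poch_neq0 => i _; half_neq0 (i%:R - (2 : F0)^-1 : F0).
  + apply: poch_neq0 => i _; addr_neq0 (i%:R - b : F0).
  + apply: poch_neq0 => i _; addr_neq0 (i%:R - c : F0).
  + apply: poch_neq0 => i _; addr_neq0 (i%:R - d : F0).
  + apply: poch_neq0 => i _; subr_neq0 (2 + b + c + d - N%:R + i%:R : F0).
  + apply: poch_neq0 => i _; addr_neq0 (N%:R + i%:R : F0).
- exact: fact_neq0.
Qed.

End GenericPoint.

(* The identity is first proved with [f] the indeterminate [X] of the rational
   function field [F(X)], where it is generic, and then specialized. *)
Lemma cleared_identity (F : fieldType) (char0 : forall m : nat, (m.+1)%:R != 0 :> F)
    (f b c d : F) N :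
  cleared_sum 2^-1 f b c d N * (closed_den f b c d N * k_num f b c d N%:R)
  = closed_num f b c d N * k_num_shift f b c d N%:R * cleared_den 2^-1 f b c d N.
Proof.
pose K := {fraction {poly F}}.
pose io := [the {rmorphism F -> K} of (@tofrac _ \o polyC)].
have X_transcendental : forall p : {poly F}, p != 0 -> (map_poly io p).[tofrac 'X] != 0.
  move=> p hp; rewrite map_poly_comp horner_map /= -/(comp_poly 'X p) comp_polyXr.
  by rewrite tofrac_eq0.
have := @generic_cleared_identity _ _ io _ X_transcendental char0 b c d N.
have -> : (2^-1 : K) = tofrac ((2^-1 : F)%:P).
  by rewrite -[RHS]/(io 2^-1) fmorphV rmorph_nat.
move=> identity_K.
have identity_poly : cleared_sum (2^-1 : F)%:P 'X b%:P c%:P d%:P N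
    * (closed_den 'X b%:P c%:P d%:P N * k_num 'X b%:P c%:P d%:P N%:R)
  = closed_num 'X b%:P c%:P d%:P N * k_num_shift 'X b%:P c%:P d%:P N%:R
    * cleared_den (2^-1 : F)%:P 'X b%:P c%:P d%:P N.
  apply/eqP; rewrite -tofrac_eq; apply/eqP.
  rewrite rmorphM rmorph_cleared_sum rmorphM rmorph_closed_den rmorph_k_num.
  rewrite rmorphM rmorphM rmorph_closed_num rmorph_k_num_shift rmorph_cleared_den.
  by rewrite !rmorph_nat; exact: identity_K.
have := congr1 (horner_eval f) identity_poly.
rewrite rmorphM rmorph_cleared_sum rmorphM rmorph_closed_den rmorph_k_num.
rewrite rmorphM rmorphM rmorph_closed_num rmorph_k_num_shift rmorph_cleared_den !rmorph_nat.
by rewrite /= !horner_evalE !hornerC hornerX.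
Qed.

Lemma sum_wp_term_closed_form (F : fieldType) (char0 : forall m : nat, (m.+1)%:R != 0 :> F)
    (f b c d : F) N :
  \prod_(x <- wp_lower 2^-1 f b c d N) poch x N != 0 ->
  closed_den f b c d N != 0 -> k_num f b c d N%:R != 0 ->
  \sum_(n < N.+1) wp_term f b c d N n = closed_form f b c d N.
Proof.
move=> hlow hden hk.
have hfact : (N`!)%:R != 0 :> F by rewrite -(prednK (fact_gt0 N)) char0.
have hcleared : cleared_den 2^-1 f b c d N != 0 by rewrite mulf_neq0 // -fact_poch.
apply: (mulIf hcleared); rewrite sum_wp_term_cleared //.
apply: (mulIf (mulf_neq0 hden hk)); rewrite cleared_identity // /closed_form.
by field; rewrite hden hk.
Qed.

Theorem mainTheorem13 (R : realType) (N : nat) (f a1 d1 d2 : R[i])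
  (hb1 : not_nonpos_int ((f - 1) / 2))
  (hb2 : not_nonpos_int (f - a1))
  (hb3 : not_nonpos_int (f - d1))
  (hb4 : not_nonpos_int (f - d2))
  (hb5 : not_nonpos_int (2 + a1 + d1 + d2 - f - N%:R))
  (hb6 : not_nonpos_int (f + N%:R))
  (hden : d1 * d2 - (1 - f + d1 + d2 - N%:R) * (1 + d1 + d2 + a1 - f) != 0)
  (hrhs1 : poch (f - a1 - d1 - d2 - 1) N != 0)
  (hrhs2 : poch ((1 - f + d1 + d2 - N%:R) * (1 + d1 + a1 - f) * (1 + d2 + a1 - f)
                 / (d1 * d2 - (1 - f + d1 + d2 - N%:R) * (1 + d1 + d2 + a1 - f))) N != 0) :
  let h := 1 - f + d1 + d2 - N%:R in
  let k := h * (1 + d1 + a1 - f) * (1 + d2 + a1 - f)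
           / (d1 * d2 - h * (1 + d1 + d2 + a1 - f)) in
  hypergeomT
    [:: f - 1; (f + 1) / 2; a1; d1; d2; 2 * f - 2 - d1 - d2 - a1 + N%:R; - N%:R]
    [:: (f - 1) / 2; f - a1; f - d1; f - d2; 2 + a1 + d1 + d2 - f - N%:R; f + N%:R]
    1 N
  = (poch f N * poch (f - d1 - d2) N * poch (f - a1 - d1 - 1) N * poch (f - a1 - d2 - 1) N)
    / (poch (f - d1) N * poch (f - d2) N * poch (f - a1) N * poch (f - a1 - d1 - d2 - 1) N)
    * (poch (k + 1) N / poch k N).
Proof.
move=> h k.
change (\sum_(n < N.+1) wp_term f a1 d1 d2 N n =
  closed_num f a1 d1 d2 N / closed_den f a1 d1 d2 N * (poch (k + 1) N / poch k N)).
case: N => [|M] in hb5 hb6 hden hrhs1 hrhs2 h k *.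
  by rewrite big_ord1 wp_term0 /closed_num /closed_den !poch0 !mulr1 !invr1 !mulr1.
rewrite -/h -/k in hrhs2.
have hk : k != 0.
  by move: hrhs2; rewrite -add1n pochD pochS poch0 mul1r addr0 mulf_eq0 => /norP [].
have hknum : k_num f a1 d1 d2 M.+1%:R != 0.
  by apply: contra_neq hk; rewrite /k_num -/h /k => ->; rewrite mul0r.
have hcden : closed_den f a1 d1 d2 M.+1 != 0.
  by rewrite /closed_den !mulf_neq0 // poch_not_nonpos_neq0.
rewrite sum_wp_term_closed_form //; last 2 first.
- by move=> m; rewrite pnatr_eq0.
- by rewrite /wp_lower !big_cons big_nil mulr1 !mulf_neq0 // poch_not_nonpos_neq0.
rewrite poch_ratio_add1 // /k /closed_form /k_num_shift -/h.
move: hknum; rewrite /k_num -/h !mulf_eq0 !negb_or => /andP [/andP [hh hb] hc].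
by field; rewrite hden hb hc hh hcden.
Qed.
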